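(* Let $m\in\mathbb{N}_+$. There exist strictly monotonic sequences $(t_i)$ and $(\tau_i)$ of natural numbers and uncountably many $m$-tuples $\alpha=(\alpha_1,\dots,\alpha_m)\in(0,1)^m$ such that, for the action $\mathbb{Z}^m\curvearrowright_\alpha\mathbb{T}^1$, the family of levels $(t_i\mathbb{T}^1,d_{\mathbb{Z}^m})_i$ of the warped cone is quasi-isometric to the family of tori $(\mathbb{T}^{m+1},\tau_i d)_i$.
   Context: $\mathbb{T}^1=\mathbb{R}/\mathbb{Z}$ with standard metric $d$ of circumference $1$, $\mathbb{T}^{m+1}$ with its standard flat metric $d$. The action $\mathbb{Z}^m\curvearrowright_\alpha\mathbb{T}^1$ is $(n_1,\dots,n_m).z=z+\sum_i n_i\alpha_i$, and $\mathbb{Z}^m$ has generating set $\{\pm e_1,\dots,\pm e_m\}$. For $t>0$, $d_{\mathbb{Z}^m}$ is the largest metric on $\mathbb{T}^1$ with $d_{\mathbb{Z}^m}(z,z')\le td(z,z')$ and $d_{\mathbb{Z}^m}(z,z\pm\alpha_j)\le1$ for all $j$. Two sequences of metric spaces $(X_i),(Y_i)$ are quasi-isometric if there are $C\ge1,A\ge0$ and maps $f_i:X_i\to Y_i$ with $C^{-1}d(x,x')-A\le d(f_i(x),f_i(x'))\le Cd(x,x')+A$ and the $A$-neighbourhood of $f_i(X_i)$ equal to $Y_i$. *)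

From Stdlib Require Import Reals Lra.
From Coquelicot Require Import Coquelicot.
Open Scope R_scope.

(* The circle T^1 = R/Z, represented by the representatives in [0,1). *)
Definition T1 (x : R) : Prop := 0 <= x < 1.

Definition mod1 (x : R) : R := frac_part x.

Definition d1 (x y : R) : R := Rmin (Rabs (x - y)) (1 - Rabs (x - y)).

Definition is_metric_on {X : Type} (S : X -> Prop) (rho : X -> X -> R) : Prop :=
  (forall x y, S x -> S y -> 0 <= rho x y) /\
  (forall x y, S x -> S y -> (rho x y = 0 <-> x = y)) /\
  (forall x y, S x -> S y -> rho x y = rho y x) /\
  (forall x y z, S x -> S y -> S z -> rho x z <= rho x y + rho y z).

(* Admissible metrics for the warped metric at level t of Z^m acting on T^1
   by rotations alpha_0, ..., alpha_{m-1}, generators +-e_j. *)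
Definition warped_admissible (m : nat) (alpha : nat -> R) (t : R)
  (rho : R -> R -> R) : Prop :=
  is_metric_on T1 rho /\
  (forall z z', T1 z -> T1 z' -> rho z z' <= t * d1 z z') /\
  (forall z j, T1 z -> (j < m)%nat ->
     rho z (mod1 (z + alpha j)) <= 1 /\ rho z (mod1 (z - alpha j)) <= 1).

(* d_{Z^m}: the largest such metric, i.e. the pointwise supremum of the
   admissible metrics. *)
Definition warped_dist (m : nat) (alpha : nat -> R) (t : R) (z z' : R) : R :=
  real (Lub_Rbar (fun r => exists rho,
          warped_admissible m alpha t rho /\ r = rho z z')).

(* The torus T^{m+1}: points x : nat -> R with x k in [0,1) for k <= m,
   and x k = 0 for k > m. *)
Definition Torus (m : nat) (x : nat -> R) : Prop :=
  (forall k, (k <= m)%nat -> T1 (x k)) /\ (forall k, (m < k)%nat -> x k = 0).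

Definition torus_dist (m : nat) (x y : nat -> R) : R :=
  sqrt (sum_f_R0 (fun k => (d1 (x k) (y k)) ^ 2) m).

Definition QI_seq {X Y : Type}
  (SX : nat -> X -> Prop) (dX : nat -> X -> X -> R)
  (SY : nat -> Y -> Prop) (dY : nat -> Y -> Y -> R) : Prop :=
  exists (C A : R), 1 <= C /\ 0 <= A /\
  exists f : nat -> X -> Y, forall i,
    (forall x, SX i x -> SY i (f i x)) /\
    (forall x x', SX i x -> SX i x' ->
       dX i x x' / C - A <= dY i (f i x) (f i x') /\
       dY i (f i x) (f i x') <= C * dX i x x' + A) /\
    (forall y, SY i y -> exists x, SX i x /\ dY i (f i x) y <= A).

Definition strictly_increasing (u : nat -> nat) : Prop :=
  forall i j, (i < j)%nat -> (u i < u j)%nat.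

Definition uncountable (S : (nat -> R) -> Prop) : Prop :=
  ~ exists g : nat -> (nat -> R), forall a, S a -> exists n, g n = a.

(* m-tuples in (0,1)^m, encoded as sequences vanishing from index m on. *)
Definition tuple_in_01 (m : nat) (alpha : nat -> R) : Prop :=
  (forall j, (j < m)%nat -> 0 < alpha j < 1) /\
  (forall j, (m <= j)%nat -> alpha j = 0).

(* Fix an integer Q >= 2 and suppose that alpha_j = u / Q^(j+1) modulo 1, up to an error
   at most 2 / Q^(m+2), with u prime to Q.  At level t = Q^(m+1) the map
   z |-> (w_k z mod 1)_(k <= m), where w_k = - Q^k / u modulo Q^m for k < m and w_m = Q^m,
   is a quasi-isometry onto the torus scaled by Q:
   - every generator moves every coordinate by O(1/Q), so a multiple of the l^1 distance of
     the images is an admissible metric, which bounds d_(Z^m) from below;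
   - conversely, if the images are at l^1 distance r, the residues of the w_k (z' - z)
     telescope into integer carries g_j = O(Q r), and z' is within O(r / t) of
     z + sum_j g_j alpha_j, which bounds d_(Z^m) from above;
   - the image is 1/Q-dense: the base-Q digits of the targets prescribe z.
   One tuple satisfies these congruences for all the moduli Q_n of the tower
   Q_(n+1) = Q_n (1 + Q_n^(m+3)) at once: take alpha_j = sum_n Q_(n-1)^(s_n) / Q_n^(j+1).
   Each choice of the exponents s_n in {1, 2} gives a different tuple, hence uncountably many. *)

From Stdlib Require Import Reals Lra Lia ZArith ClassicalEpsilon.
From Coquelicot Require Import Coquelicot.
(* Imported last, so that [d1] is the circle metric rather than [Ranalysis1.d1]. *)
Open Scope R_scope.

(** * Integers and the circle *)

Definition is_int (x : R) : Prop := exists n : Z, x = IZR n.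

Lemma is_int_IZR n : is_int (IZR n).
Proof. now exists n. Qed.

Lemma is_int_0 : is_int 0.
Proof. now exists 0%Z. Qed.

Lemma is_int_1 : is_int 1.
Proof. now exists 1%Z. Qed.

Lemma is_int_plus x y : is_int x -> is_int y -> is_int (x + y).
Proof. intros [a ->] [b ->]; exists (a + b)%Z; now rewrite plus_IZR. Qed.

Lemma is_int_opp x : is_int x -> is_int (- x).
Proof. intros [a ->]; exists (- a)%Z; now rewrite opp_IZR. Qed.

Lemma is_int_minus x y : is_int x -> is_int y -> is_int (x - y).
Proof. intros; apply is_int_plus; auto using is_int_opp. Qed.

Lemma is_int_mult x y : is_int x -> is_int y -> is_int (x * y).
Proof. intros [a ->] [b ->]; exists (a * b)%Z; now rewrite mult_IZR. Qed.

Lemma is_int_pow x n : is_int x -> is_int (x ^ n).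
Proof. intros H; induction n; simpl; auto using is_int_1, is_int_mult. Qed.

Lemma is_int_INR n : is_int (INR n).
Proof. exists (Z.of_nat n); apply INR_IZR_INZ. Qed.

#[local] Hint Resolve is_int_IZR is_int_0 is_int_1 is_int_plus is_int_opp
  is_int_minus is_int_mult is_int_pow is_int_INR : int.

Lemma is_int_trichotomy x : is_int x -> x = 0 \/ 1 <= x \/ x <= -1.
Proof.
  intros [z ->]. destruct (Z.lt_trichotomy z 0) as [H | [-> | H]].
  - right; right. apply IZR_le. lia.
  - now left.
  - right; left. apply IZR_le. lia.
Qed.

Lemma is_int_nat_or_opp x : is_int x -> exists n : nat, x = INR n \/ x = - INR n.
Proof.
  intros [z ->]. exists (Z.abs_nat z). rewrite INR_IZR_INZ, <- opp_IZR.
  destruct (Z.le_gt_cases 0 z); [left | right]; f_equal; lia.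
Qed.

Lemma T1_frac_part x : T1 (frac_part x).
Proof. destruct (base_fp x); unfold T1; lra. Qed.

Lemma frac_part_eq x k : is_int k -> k <= x < k + 1 -> frac_part x = x - k.
Proof.
  intros [n ->] Hx. symmetry.
  apply (proj2 (Int_part_frac_part_spec x n (x - IZR n) ltac:(lra) ltac:(ring))).
Qed.

Lemma frac_part_T1 x : T1 x -> frac_part x = x.
Proof. intros Hx; unfold T1 in Hx. rewrite (frac_part_eq x 0); auto with int; lra. Qed.

Lemma is_int_sub_frac_part x : is_int (x - frac_part x).
Proof.
  unfold frac_part. replace (x - (x - IZR (Int_part x))) with (IZR (Int_part x)) by ring.
  auto with int.
Qed.

#[local] Hint Resolve is_int_sub_frac_part : int.

Lemma frac_part_plus_int x n : is_int n -> frac_part (x + n) = frac_part x.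
Proof.
  intros Hn. destruct (T1_frac_part x).
  rewrite (frac_part_eq (x + n) (x - frac_part x + n)); auto with int; [ring | lra].
Qed.

Lemma frac_part_frac_plus a b : frac_part (frac_part a + b) = frac_part (a + b).
Proof.
  replace (frac_part a + b) with (a + b + - (a - frac_part a)) by ring.
  apply frac_part_plus_int; auto with int.
Qed.

Lemma d1_frac_le a b n : is_int n -> d1 (frac_part a) (frac_part b) <= Rabs (a - b - n).
Proof.
  intros Hn. unfold d1.
  set (w := frac_part a - frac_part b).
  set (M := n - (a - frac_part a) + (b - frac_part b)).
  assert (HM : is_int M) by (unfold M; auto with int).
  replace (a - b - n) with (w - M) by (unfold w, M; ring).
  destruct (T1_frac_part a), (T1_frac_part b).
  assert (Hw : -1 < w < 1) by (unfold w; lra).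
  destruct (is_int_trichotomy M HM) as [-> | [HM1 | HM1]].
  - rewrite Rminus_0_r. apply Rmin_l.
  - eapply Rle_trans; [apply Rmin_r |]. unfold Rabs; repeat destruct Rcase_abs; lra.
  - eapply Rle_trans; [apply Rmin_r |]. unfold Rabs; repeat destruct Rcase_abs; lra.
Qed.

Lemma d1_frac_attained a b :
  exists n, is_int n /\ d1 (frac_part a) (frac_part b) = Rabs (a - b - n).
Proof.
  unfold d1.
  set (w := frac_part a - frac_part b).
  set (N := (a - frac_part a) - (b - frac_part b)).
  assert (HN : is_int N) by (unfold N; auto with int).
  assert (Hab : a - b = w + N) by (unfold w, N; ring).
  destruct (T1_frac_part a), (T1_frac_part b).
  assert (Hw : -1 < w < 1) by (unfold w; lra).
  destruct (Rle_dec (Rabs w) (1 - Rabs w)) as [Hl | Hl].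
  - exists N. split; auto. rewrite Rmin_left by auto. f_equal. lra.
  - rewrite Rmin_right by lra. rewrite Hab.
    destruct (Rle_dec 0 w); [exists (N + 1) | exists (N - 1)];
      (split; [auto with int |]); unfold Rabs; repeat destruct Rcase_abs; lra.
Qed.

Lemma d1_le x y n : T1 x -> T1 y -> is_int n -> d1 x y <= Rabs (x - y - n).
Proof.
  intros Hx Hy Hn.
  replace (d1 x y) with (d1 (frac_part x) (frac_part y)) by now rewrite !frac_part_T1.
  now apply d1_frac_le.
Qed.

Lemma d1_attained x y : T1 x -> T1 y -> exists n, is_int n /\ d1 x y = Rabs (x - y - n).
Proof.
  intros Hx Hy.
  replace (d1 x y) with (d1 (frac_part x) (frac_part y)) by now rewrite !frac_part_T1.
  apply d1_frac_attained.
Qed.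

Lemma d1_sym x y : d1 x y = d1 y x.
Proof. unfold d1. now rewrite Rabs_minus_sym. Qed.

Lemma d1_le_half x y : d1 x y <= 1 / 2.
Proof.
  unfold d1. destruct (Rle_dec (Rabs (x - y)) (1 - Rabs (x - y))).
  - rewrite Rmin_left; lra.
  - rewrite Rmin_right; lra.
Qed.

Lemma d1_nonneg x y : T1 x -> T1 y -> 0 <= d1 x y.
Proof. unfold T1, d1; intros. apply Rmin_glb; unfold Rabs; destruct Rcase_abs; lra. Qed.

Lemma d1_refl x : d1 x x = 0.
Proof. unfold d1. rewrite Rminus_diag, Rabs_R0. apply Rmin_left; lra. Qed.

Lemma d1_eq_0 x y : T1 x -> T1 y -> d1 x y = 0 -> x = y.
Proof.
  unfold T1, d1; intros Hx Hy H.
  destruct (Rle_dec (Rabs (x - y)) (1 - Rabs (x - y))).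
  - rewrite Rmin_left in H by auto. unfold Rabs in H; destruct Rcase_abs; lra.
  - rewrite Rmin_right in H by lra. unfold Rabs in H; destruct Rcase_abs; lra.
Qed.

Lemma d1_triangle x y z : T1 x -> T1 y -> T1 z -> d1 x z <= d1 x y + d1 y z.
Proof.
  intros Hx Hy Hz.
  destruct (d1_attained x y Hx Hy) as [n1 [H1 ->]].
  destruct (d1_attained y z Hy Hz) as [n2 [H2 ->]].
  eapply Rle_trans; [apply (d1_le x z (n1 + n2)); auto with int |].
  replace (x - z - (n1 + n2)) with ((x - y - n1) + (y - z - n2)) by ring.
  apply Rabs_triang.
Qed.

(* The sum over [k < n], whereas [sum_f_R0 f n] sums over [k <= n]. *)
Fixpoint sumN (f : nat -> R) (n : nat) : R :=
  match n with O => 0 | S n => sumN f n + f n end.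

Lemma sumN_ext f g n : (forall k, (k < n)%nat -> f k = g k) -> sumN f n = sumN g n.
Proof.
  induction n; simpl; intros H; auto.
  rewrite IHn by (intros; apply H; lia). now rewrite H by lia.
Qed.

Lemma sumN_le f g n : (forall k, (k < n)%nat -> f k <= g k) -> sumN f n <= sumN g n.
Proof.
  induction n; simpl; intros H; [lra |].
  assert (f n <= g n) by (apply H; lia).
  assert (sumN f n <= sumN g n) by (apply IHn; intros; apply H; lia). lra.
Qed.

Lemma sumN_plus f g n : sumN (fun k => f k + g k) n = sumN f n + sumN g n.
Proof. induction n; simpl; [ring |]. rewrite IHn; ring. Qed.

Lemma sumN_scal c f n : sumN (fun k => c * f k) n = c * sumN f n.
Proof. induction n; simpl; [ring |]. rewrite IHn; ring. Qed.

Lemma sumN_opp f n : sumN (fun k => - f k) n = - sumN f n.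
Proof. induction n; simpl; [ring |]. rewrite IHn; ring. Qed.

Lemma sumN_const c n : sumN (fun _ => c) n = INR n * c.
Proof. induction n; simpl sumN; [simpl; ring |]. rewrite IHn, S_INR; ring. Qed.

Lemma sumN_le_const f c n : (forall k, (k < n)%nat -> f k <= c) -> sumN f n <= INR n * c.
Proof. intros H. rewrite <- sumN_const. now apply sumN_le. Qed.

Lemma sumN_nonneg f n : (forall k, (k < n)%nat -> 0 <= f k) -> 0 <= sumN f n.
Proof.
  intros H. replace 0 with (sumN (fun _ => 0) n) by (rewrite sumN_const; ring).
  now apply sumN_le.
Qed.

Lemma sumN_term_le f n k :
  (forall k, (k < n)%nat -> 0 <= f k) -> (k < n)%nat -> f k <= sumN f n.
Proof.
  induction n; intros H Hk; [lia |]. simpl.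
  assert (0 <= sumN f n) by (apply sumN_nonneg; intros; apply H; lia).
  destruct (Nat.eq_dec k n) as [-> | Hkn]; [lra |].
  assert (f k <= sumN f n) by (apply IHn; [intros; apply H | ]; lia).
  assert (0 <= f n) by (apply H; lia). lra.
Qed.

Lemma sumN_abs f n : Rabs (sumN f n) <= sumN (fun k => Rabs (f k)) n.
Proof.
  induction n; simpl; [rewrite Rabs_R0; lra |].
  eapply Rle_trans; [apply Rabs_triang | lra].
Qed.

Lemma is_int_sumN f n : (forall k, (k < n)%nat -> is_int (f k)) -> is_int (sumN f n).
Proof.
  induction n; intros H; simpl; [auto with int |].
  apply is_int_plus; [apply IHn; intros |]; apply H; lia.
Qed.

Lemma sum_f_R0_sumN f m : sum_f_R0 f m = sumN f (S m).
Proof. induction m; simpl; [ring |]. simpl in IHm. rewrite IHm. ring. Qed.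

Lemma sqrt_sumN_sq_le a n : (forall k, (k < n)%nat -> 0 <= a k) ->
  sqrt (sumN (fun k => a k ^ 2) n) <= sumN a n.
Proof.
  intros H. assert (Hs : 0 <= sumN a n) by now apply sumN_nonneg.
  rewrite <- (sqrt_pow2 (sumN a n)) by auto. apply sqrt_le_1_alt.
  induction n; simpl; [lra |].
  assert (0 <= sumN a n) by (apply sumN_nonneg; intros; apply H; lia).
  assert (0 <= a n) by (apply H; lia).
  assert (sumN (fun k => a k ^ 2) n <= sumN a n ^ 2) by (apply IHn; intros; apply H || lra; lia).
  simpl in *. nra.
Qed.

Lemma sumN_le_sqrt_sumN_sq a n : (forall k, (k < n)%nat -> 0 <= a k) ->
  sumN a n <= INR n * sqrt (sumN (fun k => a k ^ 2) n).
Proof.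
  intros H. apply sumN_le_const. intros k Hk.
  rewrite <- (sqrt_pow2 (a k)) by auto. apply sqrt_le_1_alt.
  apply (sumN_term_le (fun k => a k ^ 2)); auto. intros; apply pow_le; auto.
Qed.

Lemma real_Lub_Rbar_bounds (E : R -> Prop) (M r0 : R) :
  E r0 -> (forall r, E r -> r <= M) ->
  (forall r, E r -> r <= real (Lub_Rbar E)) /\ real (Lub_Rbar E) <= M.
Proof.
  intros H0 HM. destruct (Lub_Rbar_correct E) as [Hub Hlub].
  assert (HMb : Rbar_le (Lub_Rbar E) (Finite M)) by (apply Hlub; intros x Hx; apply HM; auto).
  assert (H1 := Hub r0 H0).
  destruct (Lub_Rbar E) as [l | |]; simpl in *; try contradiction.
  split; auto.
Qed.

(** * Admissible metrics *)

Section Admissible.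
Variables (m : nat) (al : nat -> R) (t : R) (rho : R -> R -> R).
Hypothesis Hadm : warped_admissible m al t rho.

Lemma admissible_triangle x y z : T1 x -> T1 y -> T1 z -> rho x z <= rho x y + rho y z.
Proof. destruct Hadm as [[_ [_ [_ H]]] _]. auto. Qed.

Lemma admissible_refl x : T1 x -> rho x x = 0.
Proof. destruct Hadm as [[_ [H _]] _]. intros; apply H; auto. Qed.

Lemma admissible_generator a j : (j < m)%nat ->
  rho (frac_part a) (frac_part (a + al j)) <= 1 /\
  rho (frac_part a) (frac_part (a - al j)) <= 1.
Proof.
  intros Hj. destruct Hadm as [_ [_ H]].
  destruct (H (frac_part a) j (T1_frac_part a) Hj) as [H1 H2]. unfold mod1 in *.
  rewrite frac_part_frac_plus in H1. unfold Rminus in H2 |- *.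
  rewrite frac_part_frac_plus in H2. auto.
Qed.

Lemma admissible_generator_nat a j N : (j < m)%nat ->
  rho (frac_part a) (frac_part (a + INR N * al j)) <= INR N /\
  rho (frac_part a) (frac_part (a - INR N * al j)) <= INR N.
Proof.
  intros Hj. induction N as [| N [IH1 IH2]].
  - simpl. replace (a + 0 * al j) with a by ring. replace (a - 0 * al j) with a by ring.
    rewrite admissible_refl by apply T1_frac_part. lra.
  - rewrite S_INR.
    destruct (admissible_generator (a + INR N * al j) j Hj) as [H1 _].
    destruct (admissible_generator (a - INR N * al j) j Hj) as [_ H2].
    replace (a + INR N * al j + al j) with (a + (INR N + 1) * al j) in H1 by ring.
    replace (a - INR N * al j - al j) with (a - (INR N + 1) * al j) in H2 by ring.
    split.
    + eapply Rle_trans; [apply (admissible_triangle _ (frac_part (a + INR N * al j)));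
                         apply T1_frac_part | lra].
    + eapply Rle_trans; [apply (admissible_triangle _ (frac_part (a - INR N * al j)));
                         apply T1_frac_part | lra].
Qed.

Lemma admissible_generator_int a j g : (j < m)%nat -> is_int g ->
  rho (frac_part a) (frac_part (a + g * al j)) <= Rabs g.
Proof.
  intros Hj Hg. destruct (is_int_nat_or_opp g Hg) as [N [-> | ->]].
  - rewrite Rabs_right by (apply Rle_ge, pos_INR). apply admissible_generator_nat; auto.
  - rewrite Rabs_Ropp, Rabs_right by (apply Rle_ge, pos_INR).
    replace (a + - INR N * al j) with (a - INR N * al j) by ring.
    apply admissible_generator_nat; auto.
Qed.

Lemma admissible_word a g J : (J <= m)%nat -> (forall j, (j < m)%nat -> is_int (g j)) ->
  rho (frac_part a) (frac_part (a + sumN (fun j => g j * al j) J))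
    <= sumN (fun j => Rabs (g j)) J.
Proof.
  intros HJ Hg. induction J as [| J IH]; simpl.
  - rewrite Rplus_0_r, admissible_refl by apply T1_frac_part. lra.
  - set (b := a + sumN (fun j => g j * al j) J).
    assert (H := admissible_generator_int b J (g J) ltac:(lia) (Hg J ltac:(lia))).
    assert (IH' := IH ltac:(lia)). fold b in IH'. rewrite <- Rplus_assoc. fold b.
    eapply Rle_trans; [apply (admissible_triangle _ (frac_part b)); apply T1_frac_part | lra].
Qed.

Lemma admissible_le_word z z' g K : 0 <= t -> T1 z -> T1 z' ->
  (forall j, (j < m)%nat -> is_int (g j)) -> is_int K ->
  rho z z' <= sumN (fun j => Rabs (g j)) m
              + t * Rabs (z + sumN (fun j => g j * al j) m - z' - K).
Proof.
  intros Ht Hz Hz' Hg HK.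
  set (S := sumN (fun j => g j * al j) m).
  assert (H1 := admissible_word z g m (le_n m) Hg). rewrite (frac_part_T1 z Hz) in H1.
  assert (H2 := proj1 (proj2 Hadm) (frac_part (z + S)) z' (T1_frac_part _) Hz').
  assert (H3 : d1 (frac_part (z + S)) z' <= Rabs (z + S - z' - K)).
  { rewrite <- (frac_part_T1 z' Hz') at 1. now apply d1_frac_le. }
  apply Rmult_le_compat_l with (r := t) in H3; auto.
  eapply Rle_trans; [apply (admissible_triangle _ (frac_part (z + S))); auto; apply T1_frac_part |].
  fold S in H1. lra.
Qed.

End Admissible.

Lemma warped_dist_ge m al t rho z z' : warped_admissible m al t rho -> T1 z -> T1 z' ->
  rho z z' <= warped_dist m al t z z'.
Proof.
  intros Hadm Hz Hz'. unfold warped_dist.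
  apply (real_Lub_Rbar_bounds _ (t * d1 z z') (rho z z')).
  - exists rho; auto.
  - intros r [rho' [Hr ->]]. apply (proj1 (proj2 Hr)); auto.
  - exists rho; auto.
Qed.

Lemma warped_dist_le_word m al t rho z z' g K : 0 <= t ->
  warped_admissible m al t rho -> T1 z -> T1 z' ->
  (forall j, (j < m)%nat -> is_int (g j)) -> is_int K ->
  warped_dist m al t z z' <= sumN (fun j => Rabs (g j)) m
                             + t * Rabs (z + sumN (fun j => g j * al j) m - z' - K).
Proof.
  intros Ht Hadm Hz Hz' Hg HK. unfold warped_dist.
  apply (real_Lub_Rbar_bounds _ _ (rho z z')).
  - exists rho; auto.
  - intros r [rho' [Hr ->]]. apply (admissible_le_word m al t rho'); auto.
Qed.

(** * Base-[Q] arithmetic *)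

Lemma pow_div_pow_near_int Q k j : 1 <= Q -> is_int Q ->
  exists M, is_int M /\ 0 <= Q ^ k / Q ^ (j + 1) - M <= 1 / Q.
Proof.
  intros HQ HQi. assert (Hj : 0 < Q ^ (j + 1)) by (apply pow_lt; lra).
  destruct (le_lt_dec (j + 1) k) as [Hk | Hk].
  - exists (Q ^ (k - (j + 1))). split; auto with int.
    replace (Q ^ k) with (Q ^ (j + 1) * Q ^ (k - (j + 1))) by (rewrite <- pow_add; f_equal; lia).
    replace (Q ^ (j + 1) * Q ^ (k - (j + 1)) / Q ^ (j + 1) - Q ^ (k - (j + 1))) with 0
      by (field; lra).
    split; [lra | apply Rdiv_le_0_compat; lra].
  - exists 0. split; auto with int. rewrite Rminus_0_r.
    replace (Q ^ (j + 1)) with (Q ^ k * Q ^ (j + 1 - k)) by (rewrite <- pow_add; f_equal; lia).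
    assert (0 < Q ^ k) by (apply pow_lt; lra).
    assert (Q <= Q ^ (j + 1 - k)) by (rewrite <- (pow_1 Q) at 1; apply Rle_pow; lia || lra).
    replace (Q ^ k / (Q ^ k * Q ^ (j + 1 - k))) with (1 / Q ^ (j + 1 - k)) by (field; lra).
    split; [apply Rdiv_le_0_compat; lra |].
    unfold Rdiv; apply Rmult_le_compat_l; [lra | apply Rinv_le_contravar; lra].
Qed.

(* [radix_tail Q a k n] is the base-[Q] fraction [0.a_k a_(k+1) ... a_(k+n-1)]. *)
Fixpoint radix_tail (Q : R) (a : nat -> R) (k n : nat) : R :=
  match n with O => 0 | S n => (a k + radix_tail Q a (S k) n) / Q end.

Lemma radix_tail_bounds Q a k n : 1 <= Q -> (forall i, 0 <= a i <= Q - 1) ->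
  0 <= radix_tail Q a k n < 1.
Proof.
  intros HQ Ha. revert k; induction n as [| n IH]; intros k; simpl; [lra |].
  destruct (IH (S k)), (Ha k). split.
  - apply Rdiv_le_0_compat; lra.
  - apply Rlt_div_l; lra.
Qed.

Lemma radix_tail_shift Q a k n : Q <> 0 -> is_int Q -> (forall i, is_int (a i)) ->
  is_int (Q ^ k * radix_tail Q a 0 (k + n) - radix_tail Q a k n).
Proof.
  intros HQ HQi Ha. revert n; induction k as [| k IH]; intros n.
  - replace (Q ^ 0 * radix_tail Q a 0 (0 + n) - radix_tail Q a 0 n) with 0
      by (simpl; ring). auto with int.
  - specialize (IH (S n)). rewrite Nat.add_succ_r in IH. simpl radix_tail in IH.
    replace (Q ^ S k * radix_tail Q a 0 (S k + n) - radix_tail Q a (S k) n)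
      with (Q * (Q ^ k * radix_tail Q a 0 (S (k + n)) - (a k + radix_tail Q a (S k) n) / Q) + a k)
      by (simpl; field; auto).
    auto with int.
Qed.

Lemma Int_part_digit Q x : 1 <= Q -> is_int Q -> T1 x ->
  let a := IZR (Int_part (Q * x)) in 0 <= a <= Q - 1 /\ a <= Q * x < a + 1.
Proof.
  intros HQ HQi Hx a. unfold T1 in Hx.
  destruct (base_Int_part (Q * x)) as [H1 H2]. fold a in H1, H2.
  assert (a <= Q * x < a + 1) by lra.
  assert (Q * x < Q) by nra.
  destruct (is_int_trichotomy a ltac:(unfold a; auto with int)) as [Ha | [Ha | Ha]];
    [| | nra];
  destruct (is_int_trichotomy (Q - a) ltac:(unfold a; auto with int)) as [Hb | [Hb | Hb]];
    lra.
Qed.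

Lemma radix_digit_approx Q a X x : 0 < Q -> a <= Q * x < a + 1 -> 0 <= X < 1 ->
  Rabs ((a + X) / Q - x) <= 1 / Q.
Proof.
  intros HQ Ha HX.
  replace ((a + X) / Q - x) with ((a - Q * x + X) / Q) by (field; lra).
  unfold Rdiv. rewrite Rabs_mult, (Rabs_right (/ Q)) by (apply Rle_ge, Rlt_le, Rinv_0_lt_compat; lra).
  apply Rmult_le_compat_r; [apply Rlt_le, Rinv_0_lt_compat; lra |].
  apply Rabs_le; lra.
Qed.

Lemma radix_approx Q m (x : nat -> R) : 1 <= Q -> is_int Q ->
  exists P, is_int P /\ forall k, (k < m)%nat ->
    exists n, is_int n /\ Rabs (Q ^ k * P / Q ^ m - x k - n) <= 1 / Q.
Proof.
  intros HQ HQi.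
  set (a := fun k => IZR (Int_part (Q * frac_part (x k)))).
  assert (Ha : forall k, 0 <= a k <= Q - 1 /\ a k <= Q * frac_part (x k) < a k + 1)
    by (intros; apply Int_part_digit; auto using T1_frac_part).
  assert (Hai : forall i, is_int (a i)) by (intros; apply is_int_IZR).
  set (X := fun k => radix_tail Q a k (m - k)).
  assert (HX : forall k, (k <= m)%nat -> is_int (Q ^ k * X 0%nat - X k)).
  { intros k Hk. pose proof (radix_tail_shift Q a k (m - k) ltac:(lra) HQi Hai) as H.
    replace (k + (m - k))%nat with m in H by lia. unfold X; cbv beta. now rewrite Nat.sub_0_r. }
  pose proof (pow_lt Q m ltac:(lra)).
  exists (Q ^ m * X 0%nat). split.
  { specialize (HX m (le_n m)). unfold X in HX; cbv beta in HX.
    rewrite Nat.sub_diag, Rminus_0_r in HX. exact HX. }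
  intros k Hk. pose proof (HX k ltac:(lia)).
  exists (Q ^ k * X 0%nat - X k - (x k - frac_part (x k))). split; [auto with int |].
  replace (Q ^ k * (Q ^ m * X 0%nat) / Q ^ m - x k - (Q ^ k * X 0%nat - X k - (x k - frac_part (x k))))
    with (X k - frac_part (x k)) by (field; lra).
  assert (HXk : X k = (a k + X (S k)) / Q)
    by (unfold X; replace (m - k)%nat with (S (m - S k)) by lia; reflexivity).
  rewrite HXk. apply radix_digit_approx; [lra | apply Ha |].
  apply radix_tail_bounds; [lra | intros; apply Ha].
Qed.

Lemma int_euclid x D : is_int x -> is_int D -> 0 < D ->
  exists J, is_int J /\ 0 <= x - D * J <= D - 1.
Proof.
  intros Hx HD HD0. set (J := IZR (Int_part (x / D))).
  exists J. split; [unfold J; auto with int |].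
  assert (E : x - D * J = D * frac_part (x / D)) by (unfold J, frac_part; field; lra).
  destruct (T1_frac_part (x / D)).
  assert (0 <= x - D * J < D) by (rewrite E; nra).
  destruct (is_int_trichotomy (D - (x - D * J))) as [E1 | [E1 | E1]];
    [unfold J; auto with int | lra ..].
Qed.

(** * One level of the warped cone *)

Definition qi_map {X Y : Type} (SX : X -> Prop) (dX : X -> X -> R)
  (SY : Y -> Prop) (dY : Y -> Y -> R) (C A : R) (f : X -> Y) : Prop :=
  (forall x, SX x -> SY (f x)) /\
  (forall x x', SX x -> SX x' ->
     dX x x' / C - A <= dY (f x) (f x') /\ dY (f x) (f x') <= C * dX x x' + A) /\
  (forall y, SY y -> exists x, SX x /\ dY (f x) y <= A).

Lemma QI_seq_of_qi_maps {X Y : Type} (SX : nat -> X -> Prop) (dX : nat -> X -> X -> R)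
  (SY : nat -> Y -> Prop) (dY : nat -> Y -> Y -> R) (C A : R) :
  1 <= C -> 0 <= A -> (forall i, exists f, qi_map (SX i) (dX i) (SY i) (dY i) C A f) ->
  QI_seq SX dX SY dY.
Proof.
  intros HC HA Hf. destruct (choice _ Hf) as [f Hf'].
  exists C, A. do 2 (split; auto). exists f. apply Hf'.
Qed.

Section Level.
Variables (m : nat) (Q u bu bq : R) (al c eps : nat -> R).
Hypothesis Hm : (0 < m)%nat.
Hypothesis HQ : 2 <= Q.
Hypothesis HQ_int : is_int Q.
Hypothesis Hu_int : is_int u.
Hypothesis Hbu_int : is_int bu.
Hypothesis Hbq_int : is_int bq.
Hypothesis Hbezout : bu * u + bq * Q ^ m = 1.
Hypothesis Hal : forall j, (j < m)%nat -> al j = u / Q ^ (j + 1) + c j + eps j.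
Hypothesis Hc_int : forall j, (j < m)%nat -> is_int (c j).
Hypothesis Heps : forall j, (j < m)%nat -> 0 <= eps j <= 2 / Q ^ (m + 2).

Let D := Q ^ m.
Let t := Q ^ (m + 1).

Lemma Qpow_pos n : 0 < Q ^ n.
Proof. apply pow_lt; lra. Qed.

Lemma D_int : is_int D.
Proof. unfold D; auto with int. Qed.

#[local] Hint Resolve D_int : int.

Lemma t_eq : t = Q * D.
Proof. unfold t, D. rewrite Nat.add_1_r. reflexivity. Qed.

(* For [k < m], [freq k] is the residue of [- Q ^ k / u] modulo [D]. *)
Definition freq k := if (k <? m)%nat then D * frac_part (- bu * Q ^ k / D) else D.

Lemma freq_lt k : (k < m)%nat ->
  freq k = - bu * Q ^ k - D * IZR (Int_part (- bu * Q ^ k / D)).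
Proof.
  intros Hk. unfold freq. rewrite (proj2 (Nat.ltb_lt k m) Hk). unfold frac_part.
  pose proof (Qpow_pos m). field. unfold D. lra.
Qed.

Lemma freq_m : freq m = D.
Proof. unfold freq. now rewrite Nat.ltb_irrefl. Qed.

Lemma freq_bounds k : (k <= m)%nat -> 0 <= freq k <= D /\ is_int (freq k).
Proof.
  intros Hk. pose proof (Qpow_pos m) as HD. fold D in HD.
  destruct (Nat.eq_dec k m) as [-> | Hkm].
  - rewrite freq_m. split; [lra | auto with int].
  - split.
    + unfold freq. rewrite (proj2 (Nat.ltb_lt k m)) by lia.
      destruct (T1_frac_part (- bu * Q ^ k / D)). nra.
    + rewrite freq_lt by lia. auto with int.
Qed.

Lemma freq_mul_u k : (k < m)%nat -> exists X, is_int X /\ u * freq k = - Q ^ k + D * X.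
Proof.
  intros Hk. set (I := IZR (Int_part (- bu * Q ^ k / D))).
  exists (bq * Q ^ k - u * I). split; [unfold I; auto with int |].
  rewrite freq_lt by auto. fold I. fold D in Hbezout.
  replace (u * (- bu * Q ^ k - D * I)) with (- (bu * u) * Q ^ k - D * u * I) by ring.
  replace (bu * u) with (1 - bq * D) by lra. ring.
Qed.

Lemma freq_step k : (k < m)%nat -> is_int ((Q * freq k - freq (S k)) / D).
Proof.
  intros Hk. pose proof (Qpow_pos m) as HD. fold D in HD. rewrite freq_lt by auto.
  destruct (Nat.eq_dec (S k) m) as [Hkm | Hkm].
  - rewrite Hkm, freq_m.
    assert (HDk : D = Q * Q ^ k) by (unfold D; now rewrite <- Hkm).
    pose proof (Qpow_pos k).
    replace ((Q * (- bu * Q ^ k - D * IZR (Int_part (- bu * Q ^ k / D))) - D) / D)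
      with (- bu - Q * IZR (Int_part (- bu * Q ^ k / D)) - 1)
      by (rewrite HDk; field; lra).
    auto with int.
  - rewrite (freq_lt (S k)) by lia.
    replace ((Q * (- bu * Q ^ k - D * IZR (Int_part (- bu * Q ^ k / D)))
              - (- bu * Q ^ S k - D * IZR (Int_part (- bu * Q ^ S k / D)))) / D)
      with (IZR (Int_part (- bu * Q ^ S k / D)) - Q * IZR (Int_part (- bu * Q ^ k / D)))
      by (simpl; field; lra).
    auto with int.
Qed.

Lemma freq_u_near_int k j : (k <= m)%nat -> (j < m)%nat ->
  exists M, is_int M /\ Rabs (freq k * u / Q ^ (j + 1) - M) <= 1 / Q.
Proof.
  intros Hk Hj. pose proof (Qpow_pos (j + 1)).
  assert (HD : D = Q ^ (j + 1) * Q ^ (m - (j + 1))) by (unfold D; rewrite <- pow_add; f_equal; lia).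
  assert (H1Q : 0 < 1 / Q) by (apply Rdiv_lt_0_compat; lra).
  destruct (Nat.eq_dec k m) as [-> | Hkm].
  - exists (u * Q ^ (m - (j + 1))). split; [auto with int |].
    rewrite freq_m, HD.
    replace (Q ^ (j + 1) * Q ^ (m - (j + 1)) * u / Q ^ (j + 1) - u * Q ^ (m - (j + 1))) with 0
      by (field; lra).
    rewrite Rabs_R0. lra.
  - destruct (freq_mul_u k ltac:(lia)) as [X [HX HuX]].
    destruct (pow_div_pow_near_int Q k j ltac:(lra) HQ_int) as [M0 [HM0 HM0b]].
    exists (X * Q ^ (m - (j + 1)) - M0). split; [auto with int |].
    replace (freq k * u / Q ^ (j + 1) - (X * Q ^ (m - (j + 1)) - M0))
      with (- (Q ^ k / Q ^ (j + 1) - M0))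
      by (rewrite Rmult_comm, HuX, HD; field; lra).
    rewrite Rabs_Ropp, Rabs_right; lra.
Qed.

Lemma freq_eps_le k j : (k <= m)%nat -> (j < m)%nat -> 0 <= freq k * eps j <= 1 / Q.
Proof.
  intros Hk Hj. destruct (freq_bounds k Hk) as [[Hf0 HfD] _]. destruct (Heps j Hj) as [He0 He1].
  pose proof (Qpow_pos m) as HD. fold D in HD, HfD.
  replace (2 / Q ^ (m + 2)) with (2 / Q / Q / D) in He1
    by (unfold D in HD |- *; rewrite pow_add; simpl; field; lra).
  split; [now apply Rmult_le_pos |].
  apply Rle_trans with (D * (2 / Q / Q / D)); [now apply Rmult_le_compat |].
  replace (D * (2 / Q / Q / D)) with (2 / Q * (1 / Q)) by (field; lra).
  rewrite <- (Rmult_1_l (1 / Q)) at 2.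
  apply Rmult_le_compat_r; [apply Rdiv_le_0_compat; lra | apply Rle_div_l; lra].
Qed.

Lemma t_eps_le j : (j < m)%nat -> t * eps j <= 1.
Proof.
  intros Hj. destruct (Heps j Hj) as [He0 He1]. pose proof (Qpow_pos (m + 1)).
  apply Rle_trans with (t * (2 / Q ^ (m + 2))); [apply Rmult_le_compat_l; unfold t; lra |].
  replace (t * (2 / Q ^ (m + 2))) with (2 / Q)
    by (unfold t; replace (m + 2)%nat with (S (m + 1)) by lia; simpl; field; lra).
  apply Rle_div_l; lra.
Qed.

Lemma freq_alpha_near_int k j : (k <= m)%nat -> (j < m)%nat ->
  exists M, is_int M /\ Rabs (freq k * al j - M) <= 2 / Q.
Proof.
  intros Hk Hj. destruct (freq_u_near_int k j Hk Hj) as [M [HM HMb]].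
  destruct (freq_bounds k Hk) as [_ Hf]. pose proof (freq_eps_le k j Hk Hj).
  exists (M + freq k * c j). split; [auto with int |].
  replace (freq k * al j - (M + freq k * c j))
    with ((freq k * u / Q ^ (j + 1) - M) + freq k * eps j)
    by (rewrite Hal by auto; field; apply pow_nonzero; lra).
  eapply Rle_trans; [apply Rabs_triang |].
  rewrite (Rabs_right (freq k * eps j)) by lra. lra.
Qed.

Definition coord z k := frac_part (freq k * z).

Definition coord_dist z z' := sumN (fun k => d1 (coord z k) (coord z' k)) (S m).

Lemma coord_dist_nonneg z z' : 0 <= coord_dist z z'.
Proof. apply sumN_nonneg. intros; apply d1_nonneg; apply T1_frac_part. Qed.

Lemma coord_dist_term_le z z' k : (k <= m)%nat -> d1 (coord z k) (coord z' k) <= coord_dist z z'.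
Proof.
  intros Hk. apply (sumN_term_le (fun k => d1 (coord z k) (coord z' k))); [| lia].
  intros; apply d1_nonneg; apply T1_frac_part.
Qed.

Lemma coord_lipschitz z z' k : (k <= m)%nat -> T1 z -> T1 z' ->
  d1 (coord z k) (coord z' k) <= D * d1 z z'.
Proof.
  intros Hk Hz Hz'. destruct (d1_attained z z' Hz Hz') as [n [Hn ->]].
  destruct (freq_bounds k Hk) as [[Hf0 HfD] Hf].
  eapply Rle_trans; [apply (d1_frac_le _ _ (freq k * n)); auto with int |].
  replace (freq k * z - freq k * z' - freq k * n) with (freq k * (z - z' - n)) by ring.
  rewrite Rabs_mult, Rabs_right by lra.
  apply Rmult_le_compat_r; auto using Rabs_pos.
Qed.

Lemma coord_generator z k j : (k <= m)%nat -> (j < m)%nat ->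
  d1 (coord z k) (coord (frac_part (z + al j)) k) <= 2 / Q /\
  d1 (coord z k) (coord (frac_part (z - al j)) k) <= 2 / Q.
Proof.
  intros Hk Hj. destruct (freq_alpha_near_int k j Hk Hj) as [M [HM HMb]].
  destruct (freq_bounds k Hk) as [_ Hf]. unfold coord. split.
  - set (I := (z + al j) - frac_part (z + al j)).
    eapply Rle_trans; [apply (d1_frac_le _ _ (freq k * I - M)); unfold I; auto with int |].
    replace (freq k * z - freq k * frac_part (z + al j) - (freq k * I - M))
      with (- (freq k * al j - M)) by (unfold I; ring).
    now rewrite Rabs_Ropp.
  - set (I := (z - al j) - frac_part (z - al j)).
    eapply Rle_trans; [apply (d1_frac_le _ _ (freq k * I + M)); unfold I; auto with int |].
    replace (freq k * z - freq k * frac_part (z - al j) - (freq k * I + M))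
      with (freq k * al j - M) by (unfold I; ring).
    exact HMb.
Qed.

Definition level_metric z z' := Q / (4 * (INR m + 1)) * coord_dist z z' + d1 z z' / 2.

Lemma level_metric_is_metric : is_metric_on T1 level_metric.
Proof.
  assert (Hc : 0 <= Q / (4 * (INR m + 1))) by (apply Rdiv_le_0_compat; pose proof (pos_INR m); lra).
  unfold level_metric, coord_dist. split; [| split; [| split]].
  - intros x y Hx Hy. pose proof (coord_dist_nonneg x y). pose proof (d1_nonneg x y Hx Hy).
    unfold coord_dist in *. nra.
  - intros x y Hx Hy. split.
    + intros H0. pose proof (coord_dist_nonneg x y). pose proof (d1_nonneg x y Hx Hy).
      unfold coord_dist in *. apply d1_eq_0; auto. nra.
    + intros ->. rewrite d1_refl, (sumN_ext _ (fun _ => 0)) by (intros; apply d1_refl).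
      rewrite sumN_const. lra.
  - intros x y Hx Hy. rewrite d1_sym, (sumN_ext _ (fun k => d1 (coord y k) (coord x k))); auto.
    intros; apply d1_sym.
  - intros x y z Hx Hy Hz.
    assert (sumN (fun k => d1 (coord x k) (coord z k)) (S m) <=
            sumN (fun k => d1 (coord x k) (coord y k)) (S m)
            + sumN (fun k => d1 (coord y k) (coord z k)) (S m)).
    { rewrite <- sumN_plus. apply sumN_le. intros; apply d1_triangle; apply T1_frac_part. }
    pose proof (d1_triangle x y z Hx Hy Hz). nra.
Qed.

Lemma level_metric_le z z' : T1 z -> T1 z' -> level_metric z z' <= t * d1 z z'.
Proof.
  intros Hz Hz'. unfold level_metric. pose proof (pos_INR m). pose proof (Qpow_pos m).
  pose proof (d1_nonneg z z' Hz Hz').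
  assert (Hs : coord_dist z z' <= INR (S m) * (D * d1 z z'))
    by (apply sumN_le_const; intros; apply coord_lipschitz; auto; lia).
  rewrite S_INR in Hs.
  apply Rmult_le_compat_l with (r := Q / (4 * (INR m + 1))) in Hs;
    [| apply Rdiv_le_0_compat; lra].
  replace (Q / (4 * (INR m + 1)) * ((INR m + 1) * (D * d1 z z'))) with (t / 4 * d1 z z') in Hs
    by (rewrite t_eq; field; lra).
  assert (1 <= t) by (apply pow_R1_Rle; lra). nra.
Qed.

Lemma level_metric_generator z j : T1 z -> (j < m)%nat ->
  level_metric z (mod1 (z + al j)) <= 1 /\ level_metric z (mod1 (z - al j)) <= 1.
Proof.
  intros Hz Hj. pose proof (pos_INR m).
  assert (Hb : forall a, (forall k, (k <= m)%nat -> d1 (coord z k) (coord (frac_part a) k) <= 2 / Q) ->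
            level_metric z (frac_part a) <= 1).
  { intros a Ha. unfold level_metric.
    assert (Hs : coord_dist z (frac_part a) <= INR (S m) * (2 / Q))
      by (apply sumN_le_const; intros; apply Ha; lia).
    rewrite S_INR in Hs.
    apply Rmult_le_compat_l with (r := Q / (4 * (INR m + 1))) in Hs;
      [| apply Rdiv_le_0_compat; lra].
    replace (Q / (4 * (INR m + 1)) * ((INR m + 1) * (2 / Q))) with (1 / 2) in Hs by (field; lra).
    pose proof (d1_le_half z (frac_part a)). lra. }
  unfold mod1. split; apply Hb; intros k Hk; apply (coord_generator z k j Hk Hj).
Qed.

Lemma level_metric_admissible : warped_admissible m al t level_metric.
Proof.
  split; [apply level_metric_is_metric | split].
  - apply level_metric_le.
  - apply level_metric_generator.
Qed.

Lemma coord_residues z z' : exists p : nat -> R, forall k,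
  is_int (p k) /\ d1 (coord z k) (coord z' k) = Rabs (freq k * (z' - z) - p k).
Proof.
  apply (choice (fun k p => is_int p /\ d1 (coord z k) (coord z' k) = Rabs (freq k * (z' - z) - p))).
  intros k. destruct (d1_frac_attained (freq k * z') (freq k * z)) as [p [Hp E]].
  exists p. split; auto. rewrite d1_sym. unfold coord. rewrite E. f_equal. ring.
Qed.

Section Residues.
Variables (y : R) (p : nat -> R).
Hypothesis Hp : forall k, is_int (p k).

Definition res k := freq k * y - p k.

(* Removing the multiple of [res m] makes the last corrected residue vanish
   ([freq m = D]), so that the carries telescope. *)
Definition tres k := res k - res m * freq k / D.

Definition carry j := Q * tres j - tres (S j).

Lemma carry_int j : (j < m)%nat -> is_int (carry j).
Proof.
  intros Hj. pose proof (Qpow_pos m) as HD. fold D in HD.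
  replace (carry j) with (- Q * p j + p (S j) + p m * ((Q * freq j - freq (S j)) / D))
    by (unfold carry, tres, res; rewrite freq_m; field; lra).
  pose proof (freq_step j Hj). auto with int.
Qed.

Lemma tres_m : tres m = 0.
Proof. pose proof (Qpow_pos m). unfold tres. rewrite freq_m. field. unfold D; lra. Qed.

Lemma sumN_carry J : sumN (fun j => carry j / Q ^ (j + 1)) J = tres 0 - tres J / Q ^ J.
Proof.
  induction J as [| J IH]; simpl sumN; [simpl; field |].
  rewrite IH. unfold carry. pose proof (Qpow_pos J).
  rewrite Nat.add_1_r. simpl. field. lra.
Qed.

Lemma carry_abs_le rho j : (forall k, (k <= m)%nat -> Rabs (res k) <= rho) -> (j < m)%nat ->
  Rabs (carry j) <= 3 * Q * rho.
Proof.
  intros Hr Hj. pose proof (Qpow_pos m) as HD. fold D in HD.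
  assert (HT : forall k, (k <= m)%nat -> Rabs (tres k) <= 2 * rho).
  { intros k Hk. destruct (freq_bounds k Hk) as [[Hf0 HfD] _].
    assert (Rabs (res m * freq k / D) <= Rabs (res m)).
    { unfold Rdiv. rewrite Rmult_assoc, Rabs_mult, (Rabs_right (freq k * / D))
        by (apply Rle_ge, Rmult_le_pos; [lra | apply Rlt_le, Rinv_0_lt_compat; lra]).
      rewrite <- (Rmult_1_r (Rabs (res m))) at 2.
      apply Rmult_le_compat_l; [apply Rabs_pos |].
      rewrite <- (Rinv_r D) by lra. apply Rmult_le_compat_r; [apply Rlt_le, Rinv_0_lt_compat |]; lra. }
    pose proof (Rabs_triang (res k) (- (res m * freq k / D))). rewrite Rabs_Ropp in *.
    pose proof (Hr k Hk). pose proof (Hr m (le_n m)). unfold tres, Rminus. lra. }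
  assert (H1 := HT j ltac:(lia)). assert (H2 := HT (S j) ltac:(lia)).
  assert (H3 := Rabs_triang (Q * tres j) (- tres (S j))).
  rewrite Rabs_Ropp, Rabs_mult, (Rabs_right Q) in H3 by lra.
  unfold carry, Rminus.
  assert (Q * Rabs (tres j) <= Q * (2 * rho)) by (apply Rmult_le_compat_l; lra).
  assert (0 <= rho) by (pose proof (Hr m (le_n m)); pose proof (Rabs_pos (res m)); lra).
  assert (2 * rho <= Q * rho) by (apply Rmult_le_compat_r; lra).
  lra.
Qed.

Lemma carry_word : exists K, is_int K /\
  - sumN (fun j => carry j * al j) m - y - K = - (res m / D) - sumN (fun j => carry j * eps j) m.
Proof.
  pose proof (Qpow_pos m) as HD. fold D in HD.
  destruct (freq_mul_u 0 Hm) as [X0 [HX0 Hu0]].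
  exists (u * p 0%nat - X0 * p m - sumN (fun j => carry j * c j) m). split.
  { apply is_int_minus; [auto with int |].
    apply is_int_sumN. intros j Hj. pose proof (carry_int j Hj). pose proof (Hc_int j Hj). auto with int. }
  assert (Hsum : sumN (fun j => carry j * al j) m =
    u * sumN (fun j => carry j / Q ^ (j + 1)) m + sumN (fun j => carry j * c j) m
    + sumN (fun j => carry j * eps j) m).
  { rewrite <- sumN_scal, <- !sumN_plus. apply sumN_ext. intros j Hj.
    rewrite Hal by auto. field. apply pow_nonzero; lra. }
  assert (HuT : u * tres 0 = - u * p 0%nat - p m / D + X0 * p m).
  { unfold tres, res. rewrite freq_m.
    replace (u * (freq 0 * y - p 0%nat - (D * y - p m) * freq 0 / D))
      with (u * freq 0 * (y - (D * y - p m) / D) - u * p 0%nat) by (field; lra).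
    rewrite Hu0. simpl. field. lra. }
  rewrite Hsum, sumN_carry, tres_m, Rdiv_0_l, Rminus_0_r, HuT.
  unfold res. rewrite freq_m. field. lra.
Qed.

Lemma word_error_le rho : (forall k, (k <= m)%nat -> Rabs (res k) <= rho) ->
  t * Rabs (- (res m / D) - sumN (fun j => carry j * eps j) m)
    <= Q * rho + sumN (fun j => Rabs (carry j)) m.
Proof.
  intros Hr. pose proof (Qpow_pos m) as HD. fold D in HD.
  assert (Ht : 0 <= t) by (unfold t; apply Rlt_le, Qpow_pos).
  eapply Rle_trans; [apply Rmult_le_compat_l; [exact Ht | apply Rabs_triang] |].
  rewrite !Rabs_Ropp, Rmult_plus_distr_l. apply Rplus_le_compat.
  - unfold Rdiv. rewrite Rabs_mult, (Rabs_right (/ D))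
      by (apply Rle_ge, Rlt_le, Rinv_0_lt_compat; lra).
    rewrite t_eq. replace (Q * D * (Rabs (res m) * / D)) with (Q * Rabs (res m)) by (field; lra).
    apply Rmult_le_compat_l; [lra | auto].
  - eapply Rle_trans; [apply Rmult_le_compat_l; [exact Ht | apply sumN_abs] |].
    rewrite <- sumN_scal. apply sumN_le. intros j Hj.
    rewrite Rabs_mult, (Rabs_right (eps j)) by (apply Rle_ge, Heps; auto).
    pose proof (t_eps_le j Hj). pose proof (Rabs_pos (carry j)). nra.
Qed.

End Residues.

Lemma warped_dist_le_coord_dist z z' : T1 z -> T1 z' ->
  warped_dist m al t z z' <= (6 * INR m + 1) * Q * coord_dist z z'.
Proof.
  intros Hz Hz'. pose proof (pos_INR m). pose proof (coord_dist_nonneg z z').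
  destruct (coord_residues z z') as [p Hp].
  assert (Hpi : forall k, is_int (p k)) by apply Hp.
  set (rho := coord_dist z z') in *.
  assert (Hr : forall k, (k <= m)%nat -> Rabs (res (z' - z) p k) <= rho).
  { intros k Hk. unfold res. rewrite <- (proj2 (Hp k)). now apply coord_dist_term_le. }
  destruct (carry_word (z' - z) p Hpi) as [K [HK Hword]].
  assert (Herr := word_error_le (z' - z) p rho Hr).
  set (G := carry (z' - z) p) in *.
  assert (HsG : sumN (fun j => Rabs (G j)) m <= INR m * (3 * Q * rho))
    by (apply sumN_le_const; intros; apply carry_abs_le; auto).
  eapply Rle_trans.
  { apply (warped_dist_le_word m al t level_metric z z' (fun j => - G j) K); auto.
    - unfold t; apply Rlt_le, Qpow_pos.
    - apply level_metric_admissible.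
    - intros j Hj. apply is_int_opp, carry_int; auto. }
  rewrite (sumN_ext (fun j => Rabs (- G j)) (fun j => Rabs (G j))) by (intros; apply Rabs_Ropp).
  rewrite (sumN_ext (fun j => - G j * al j) (fun j => - (G j * al j))), sumN_opp
    by (intros; ring).
  replace (z + - sumN (fun j => G j * al j) m - z' - K)
    with (- sumN (fun j => G j * al j) m - (z' - z) - K) by ring.
  rewrite Hword. nra.
Qed.

Lemma freq_mul_congr k P' J : (k < m)%nat -> is_int P' -> is_int J ->
  is_int (freq k * (- u * P' - D * J) / D - Q ^ k * P' / D).
Proof.
  intros Hk HP' HJ. pose proof (Qpow_pos m) as HD. fold D in HD, Hbezout.
  set (I := IZR (Int_part (- bu * Q ^ k / D))).
  replace (freq k * (- u * P' - D * J) / D - Q ^ k * P' / D)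
    with (- bq * Q ^ k * P' + bu * Q ^ k * J + I * u * P' + I * D * J
          + (bu * u + bq * D - 1) * (Q ^ k * P' / D))
    by (rewrite freq_lt by auto; fold I; field; lra).
  rewrite Hbezout, Rminus_diag, Rmult_0_l, Rplus_0_r. unfold I. auto 20 with int.
Qed.

Lemma coord_dense (v : nat -> R) : Torus m v ->
  exists z, T1 z /\ forall k, (k <= m)%nat -> d1 (coord z k) (v k) <= 1 / Q.
Proof.
  intros [Hv _]. pose proof (Qpow_pos m) as HD. fold D in HD.
  destruct (radix_approx Q m (fun k => v k - freq k * v m / D) ltac:(lra) HQ_int)
    as [P' [HP' Happrox]].
  destruct (int_euclid (- u * P') D ltac:(auto with int) D_int HD) as [J [HJ HPb]].
  set (P := - u * P' - D * J) in HPb.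
  assert (HP : is_int P) by (unfold P; auto with int).
  assert (Hvm := Hv m (le_n m)). unfold T1 in Hvm.
  exists ((P + v m) / D). split.
  { unfold T1. split; [apply Rdiv_le_0_compat | apply Rlt_div_l]; lra. }
  intros k Hk. destruct (Nat.eq_dec k m) as [-> | Hkm].
  { unfold coord. rewrite freq_m.
    replace (D * ((P + v m) / D)) with (v m + P) by (field; lra).
    rewrite frac_part_plus_int, frac_part_T1, d1_refl by (auto; unfold T1; lra).
    apply Rdiv_le_0_compat; lra. }
  destruct (Happrox k ltac:(lia)) as [n [Hn Hnb]].
  assert (Hc := freq_mul_congr k P' J ltac:(lia) HP' HJ). fold P D in Hc.
  unfold coord. rewrite <- (frac_part_T1 (v k)) at 1 by (apply Hv; auto).
  eapply Rle_trans; [apply (d1_frac_le _ _ (freq k * P / D - Q ^ k * P' / D + n)); auto with int |].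
  replace (freq k * ((P + v m) / D) - v k - (freq k * P / D - Q ^ k * P' / D + n))
    with (Q ^ k * P' / Q ^ m - (v k - freq k * v m / D) - n) by (unfold D in *; field; lra).
  exact Hnb.
Qed.

Definition torus_point z k := if (k <=? m)%nat then coord z k else 0.

Lemma torus_point_Torus z : Torus m (torus_point z).
Proof.
  unfold torus_point. split; intros k Hk.
  - rewrite (proj2 (Nat.leb_le k m) Hk). apply T1_frac_part.
  - destruct (Nat.leb_spec k m); [lia | reflexivity].
Qed.

Lemma torus_dist_torus_point z v :
  torus_dist m (torus_point z) v = sqrt (sumN (fun k => d1 (coord z k) (v k) ^ 2) (S m)).
Proof.
  unfold torus_dist. rewrite sum_f_R0_sumN. f_equal. apply sumN_ext. intros k Hk.
  unfold torus_point. now rewrite (proj2 (Nat.leb_le k m)) by lia.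
Qed.

Lemma torus_dist_le_coord_dist z z' :
  torus_dist m (torus_point z) (torus_point z') <= coord_dist z z'.
Proof.
  rewrite torus_dist_torus_point.
  rewrite (sumN_ext _ (fun k => d1 (coord z k) (coord z' k) ^ 2)).
  - apply sqrt_sumN_sq_le. intros; apply d1_nonneg; apply T1_frac_part.
  - intros k Hk. unfold torus_point. now rewrite (proj2 (Nat.leb_le k m)) by lia.
Qed.

Lemma coord_dist_le_torus_dist z z' :
  coord_dist z z' <= (INR m + 1) * torus_dist m (torus_point z) (torus_point z').
Proof.
  rewrite torus_dist_torus_point, <- S_INR.
  rewrite (sumN_ext (fun k => d1 (coord z k) (torus_point z' k) ^ 2)
                    (fun k => d1 (coord z k) (coord z' k) ^ 2)).
  - apply sumN_le_sqrt_sumN_sq. intros; apply d1_nonneg; apply T1_frac_part.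
  - intros k Hk. unfold torus_point. now rewrite (proj2 (Nat.leb_le k m)) by lia.
Qed.

Lemma warped_dist_le_torus_dist z z' : T1 z -> T1 z' ->
  warped_dist m al t z z'
    <= 7 * (INR m + 1) ^ 2 * (Q * torus_dist m (torus_point z) (torus_point z')).
Proof.
  intros Hz Hz'. pose proof (pos_INR m).
  set (T := torus_dist m (torus_point z) (torus_point z')).
  assert (HT : 0 <= T) by apply sqrt_pos.
  assert (HcT := coord_dist_le_torus_dist z z'). fold T in HcT.
  eapply Rle_trans; [now apply warped_dist_le_coord_dist |].
  assert (0 <= (6 * INR m + 1) * Q) by nra.
  apply Rle_trans with ((6 * INR m + 1) * Q * ((INR m + 1) * T));
    [now apply Rmult_le_compat_l |].
  assert (0 <= Q * T) by nra. simpl. nra.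
Qed.

Lemma torus_dist_le_warped_dist z z' : T1 z -> T1 z' ->
  Q * torus_dist m (torus_point z) (torus_point z') <= 4 * (INR m + 1) * warped_dist m al t z z'.
Proof.
  intros Hz Hz'. pose proof (pos_INR m).
  assert (Hlow := warped_dist_ge _ _ _ _ z z' level_metric_admissible Hz Hz').
  unfold level_metric in Hlow.
  pose proof (d1_nonneg z z' Hz Hz'). pose proof (coord_dist_nonneg z z').
  assert (Q * coord_dist z z' <= 4 * (INR m + 1) * warped_dist m al t z z').
  { replace (Q * coord_dist z z') with (4 * (INR m + 1) * (Q / (4 * (INR m + 1)) * coord_dist z z'))
      by (field; lra).
    apply Rmult_le_compat_l; lra. }
  pose proof (torus_dist_le_coord_dist z z').
  assert (Q * torus_dist m (torus_point z) (torus_point z') <= Q * coord_dist z z')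
    by (apply Rmult_le_compat_l; lra).
  lra.
Qed.

Lemma torus_point_dense v : Torus m v ->
  exists z, T1 z /\ Q * torus_dist m (torus_point z) v <= INR m + 1.
Proof.
  intros Hv. destruct (coord_dense v Hv) as [z [Hz Hd]]. exists z. split; auto.
  rewrite torus_dist_torus_point.
  apply Rle_trans with (Q * sumN (fun k => d1 (coord z k) (v k)) (S m)).
  - apply Rmult_le_compat_l; [lra |]. apply sqrt_sumN_sq_le. intros k Hk.
    apply d1_nonneg; [apply T1_frac_part | apply (proj1 Hv); lia].
  - apply Rle_trans with (Q * (INR (S m) * (1 / Q))).
    + apply Rmult_le_compat_l; [lra |]. apply sumN_le_const. intros; apply Hd; lia.
    + rewrite S_INR. right. field. lra.
Qed.

Lemma level_quasi_isometry :
  qi_map T1 (warped_dist m al t) (Torus m) (fun x y => Q * torus_dist m x y)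
         (7 * (INR m + 1) ^ 2) (INR m + 1) torus_point.
Proof.
  pose proof (pos_INR m). assert (HC : 0 < 7 * (INR m + 1) ^ 2) by (simpl; nra).
  split; [intros; apply torus_point_Torus | split; [| apply torus_point_dense]].
  intros z z' Hz Hz'.
  pose proof (warped_dist_le_torus_dist z z' Hz Hz').
  pose proof (torus_dist_le_warped_dist z z' Hz Hz').
  pose proof (warped_dist_ge _ _ _ _ z z' level_metric_admissible Hz Hz').
  pose proof (proj1 level_metric_is_metric z z' Hz Hz').
  split.
  - assert (warped_dist m al t z z' / (7 * (INR m + 1) ^ 2)
              <= Q * torus_dist m (torus_point z) (torus_point z')) by (apply Rle_div_l; lra).
    lra.
  - assert (4 * (INR m + 1) * warped_dist m al t z z'
              <= 7 * (INR m + 1) ^ 2 * warped_dist m al t z z') by (simpl; nra).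
    lra.
Qed.

End Level.

(** * The rotation numbers *)

Lemma uncountable_image_bool_seq (f : (nat -> bool) -> nat -> R) :
  (forall e e', f e = f e' -> forall k, e k = e' k) -> uncountable (fun a => exists e, a = f e).
Proof.
  intros Hinj [g Hg].
  destruct (choice (fun n e => (exists e0, f e0 = g n) -> f e = g n)) as [h Hh].
  { intros n. destruct (excluded_middle_informative (exists e0, f e0 = g n)) as [[e0 He0] | H].
    - now exists e0.
    - exists (fun _ => true). intros H'. contradiction. }
  set (d := fun n => negb (h n n)).
  destruct (Hg (f d) (ex_intro _ d eq_refl)) as [n Hn].
  assert (E := Hh n (ex_intro _ d (eq_sym Hn))). rewrite Hn in E.
  assert (E2 := Hinj _ _ E n). unfold d in E2. destruct (h n n); discriminate.
Qed.

Definition int_coprime (a b : R) : Prop := exists p q, is_int p /\ is_int q /\ p * a + q * b = 1.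

Lemma int_coprime_mult a b c : is_int a -> is_int b -> is_int c ->
  int_coprime a b -> int_coprime a c -> int_coprime a (b * c).
Proof.
  intros Ha Hb Hc [p1 [q1 [Hp1 [Hq1 E1]]]] [p2 [q2 [Hp2 [Hq2 E2]]]].
  exists (p1 * p2 * a + p1 * q2 * c + q1 * b * p2), (q1 * q2).
  split; [| split]; auto 10 with int.
  replace 1 with ((p1 * a + q1 * b) * (p2 * a + q2 * c)) by (rewrite E1, E2; ring). ring.
Qed.

Lemma int_coprime_pow a b k : is_int a -> is_int b -> int_coprime a b -> int_coprime a (b ^ k).
Proof.
  intros Ha Hb H. induction k as [| k IH].
  - exists 0, 1. split; [| split]; auto with int. simpl; ring.
  - simpl. rewrite Rmult_comm. apply int_coprime_mult; auto with int.
Qed.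

Lemma pow_pred_mult x k : (0 < k)%nat -> x ^ k = x * x ^ (k - 1).
Proof. intros Hk. destruct k as [| k]; [lia |]. simpl. now rewrite Nat.sub_0_r. Qed.

Lemma pow_one_plus_sub_one x k : is_int x -> exists Y, is_int Y /\ (1 + x) ^ k - 1 = x * Y.
Proof.
  intros Hx. induction k as [| k [Y [HY E]]].
  - exists 0. split; [auto with int | simpl; ring].
  - exists ((1 + x) * Y + 1). split; [auto with int |].
    replace ((1 + x) ^ S k - 1) with ((1 + x) * ((1 + x) ^ k - 1) + x) by (simpl; ring).
    rewrite E. ring.
Qed.

Fixpoint modulus (m n : nat) : nat :=
  match n with O => 2 | S n => modulus m n * (1 + modulus m n ^ (m + 3)) end.

Lemma modulus_ge_2 m n : (2 <= modulus m n)%nat.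
Proof.
  induction n as [| n IH]; simpl; [lia |].
  assert (1 <= modulus m n ^ (m + 3))%nat by (apply Nat.neq_0_lt_0, Nat.pow_nonzero; lia). nia.
Qed.

Lemma modulus_lt_S m n : (modulus m n < modulus m (S n))%nat.
Proof.
  simpl. pose proof (modulus_ge_2 m n).
  assert (1 <= modulus m n ^ (m + 3))%nat by (apply Nat.neq_0_lt_0, Nat.pow_nonzero; lia). nia.
Qed.

Lemma modulus_increasing m : strictly_increasing (modulus m).
Proof.
  intros i j H. induction H as [| j H IH].
  - apply modulus_lt_S.
  - eapply Nat.lt_trans; [exact IH | apply modulus_lt_S].
Qed.

Section Tower.
Variable m : nat.
Hypothesis Hm : (0 < m)%nat.

Let Qn n := INR (modulus m n).
Let Rn n := 1 + Qn n ^ (m + 3).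

Lemma Qn_S n : Qn (S n) = Qn n * Rn n.
Proof.
  unfold Qn, Rn.
  change (modulus m (S n)) with (modulus m n * (1 + modulus m n ^ (m + 3)))%nat.
  now rewrite mult_INR, plus_INR, pow_INR.
Qed.

Lemma Qn_ge_2 n : 2 <= Qn n.
Proof. unfold Qn. replace 2 with (INR 2) by (simpl; ring). apply le_INR, modulus_ge_2. Qed.

Lemma Qn_int n : is_int (Qn n).
Proof. unfold Qn; auto with int. Qed.

Lemma Rn_int n : is_int (Rn n).
Proof. unfold Rn. pose proof (Qn_int n). auto with int. Qed.

#[local] Hint Resolve Qn_int Rn_int : int.

Definition expo (e : nat -> bool) n : nat := if e n then 2%nat else 1%nat.

Definition series_term (e : nat -> bool) (j n : nat) : R :=
  match n with
  | O => 1 / Qn 0 ^ (j + 1)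
  | S n' => Qn n' ^ expo e n' / Qn (S n') ^ (j + 1)
  end.

Definition partial_sum e j N := sumN (series_term e j) N.

Definition tail_bound n := 1 / Qn n ^ (m + 2).

Definition alpha (e : nat -> bool) (j : nat) : R :=
  if (j <? m)%nat then real (Lub_Rbar (fun x => exists N, x = partial_sum e j N)) else 0.

Lemma series_term_nonneg e j n : 0 <= series_term e j n.
Proof.
  pose proof (Qn_ge_2 0).
  destruct n as [| n]; simpl; [| pose proof (Qn_ge_2 n); pose proof (Qn_ge_2 (S n))];
    (apply Rdiv_le_0_compat; [try apply pow_le; lra | apply pow_lt; lra]).
Qed.

Lemma tail_bound_pos n : 0 < tail_bound n.
Proof. unfold tail_bound. pose proof (Qn_ge_2 n). apply Rdiv_lt_0_compat; [lra | apply pow_lt; lra]. Qed.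

Lemma series_term_le_tail_bound e j n : series_term e j (S n) <= tail_bound n.
Proof.
  simpl. unfold tail_bound. pose proof (Qn_ge_2 n) as H1. pose proof (Qn_ge_2 (S n)) as H2.
  assert (Qn n ^ (m + 3) <= Rn n) by (unfold Rn; lra).
  assert (Hs : Qn n ^ expo e n <= Qn n ^ 2) by (unfold expo; destruct (e n); simpl; nra).
  assert (Hp : Qn (S n) <= Qn (S n) ^ (j + 1))
    by (rewrite <- (pow_1 (Qn (S n))) at 1; apply Rle_pow; lia || lra).
  assert (Hpos : 0 < Qn n ^ (m + 2)) by (apply pow_lt; lra).
  assert (HQ3 : Qn n ^ (m + 3) = Qn n * Qn n ^ (m + 2))
    by (replace (m + 3)%nat with (S (m + 2)) by lia; reflexivity).
  apply Rle_div_l; [apply pow_lt; lra |].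
  replace (1 / Qn n ^ (m + 2) * Qn (S n) ^ (j + 1))
    with (Qn (S n) ^ (j + 1) / Qn n ^ (m + 2)) by (field; lra).
  apply Rle_div_r; [lra |].
  apply Rle_trans with (Qn n ^ 2 * Qn n ^ (m + 2)); [apply Rmult_le_compat_r; lra |].
  rewrite Qn_S in *. simpl. nra.
Qed.

Lemma tail_bound_half n : 2 * tail_bound (S n) <= tail_bound n.
Proof.
  unfold tail_bound. pose proof (Qn_ge_2 n).
  assert (1 <= Qn n ^ (m + 3)) by (apply pow_R1_Rle; lra).
  assert (2 <= Rn n) by (unfold Rn; lra).
  assert (HS : 2 * Qn n <= Qn (S n)) by (rewrite Qn_S; nra).
  assert (H3 : (2 * Qn n) ^ (m + 2) <= Qn (S n) ^ (m + 2)) by (apply pow_incr; lra).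
  rewrite Rpow_mult_distr in H3.
  assert (2 <= 2 ^ (m + 2)) by (rewrite <- (pow_1 2) at 1; apply Rle_pow; lia || lra).
  assert (Hp : 0 < Qn n ^ (m + 2)) by (apply pow_lt; lra).
  assert (Hp' : 0 < Qn (S n) ^ (m + 2)) by (apply pow_lt; lra).
  replace (2 * (1 / Qn (S n) ^ (m + 2))) with (2 / Qn (S n) ^ (m + 2)) by (field; lra).
  apply Rle_div_l; [lra |].
  replace (1 / Qn n ^ (m + 2) * Qn (S n) ^ (m + 2)) with (Qn (S n) ^ (m + 2) / Qn n ^ (m + 2))
    by (field; lra).
  apply Rle_div_r; [lra | nra].
Qed.

Lemma partial_sum_mono e j N M : (N <= M)%nat -> partial_sum e j N <= partial_sum e j M.
Proof.
  intros H. induction H as [| M HM IH]; [lra |].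
  unfold partial_sum in *. simpl. pose proof (series_term_nonneg e j M). lra.
Qed.

Lemma partial_sum_tail e j n N :
  partial_sum e j (S n + N) + 2 * tail_bound (n + N) <= partial_sum e j (S n) + 2 * tail_bound n.
Proof.
  induction N as [| N IH]; [rewrite !Nat.add_0_r; lra |].
  replace (S n + S N)%nat with (S (S n + N)) by lia.
  replace (n + S N)%nat with (S (n + N)) by lia.
  assert (E : partial_sum e j (S (S n + N))
              = partial_sum e j (S n + N) + series_term e j (S n + N)) by reflexivity.
  assert (H := series_term_le_tail_bound e j (n + N)). change (S (n + N)) with (S n + N)%nat in H.
  pose proof (tail_bound_half (n + N)). lra.
Qed.

Lemma alpha_bounds e j n : (j < m)%nat ->
  partial_sum e j (S n) <= alpha e j <= partial_sum e j (S n) + 2 * tail_bound n.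
Proof.
  intros Hj. unfold alpha. rewrite (proj2 (Nat.ltb_lt j m) Hj).
  destruct (real_Lub_Rbar_bounds (fun x => exists N, x = partial_sum e j N)
              (partial_sum e j (S n) + 2 * tail_bound n) (partial_sum e j (S n))) as [H1 H2].
  - now exists (S n).
  - intros r [N ->]. destruct (le_lt_dec N (S n)).
    + pose proof (partial_sum_mono e j N (S n) l). pose proof (tail_bound_pos n). lra.
    + replace N with (S n + (N - S n))%nat by lia. pose proof (partial_sum_tail e j n (N - S n)).
      pose proof (tail_bound_pos (n + (N - S n))). lra.
  - split; auto. apply H1. now exists (S n).
Qed.

Lemma alpha_tuple e : tuple_in_01 m (alpha e).
Proof.
  split.
  - intros j Hj. destruct (alpha_bounds e j 0 Hj) as [H1 H2].
    assert (HQ0 : Qn 0 = 2) by (unfold Qn; simpl; ring).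
    unfold partial_sum, tail_bound in *. simpl in H1, H2. rewrite HQ0 in *.
    assert (H2j : 2 <= 2 ^ (j + 1)) by (rewrite <- (pow_1 2) at 1; apply Rle_pow; lia || lra).
    assert (H2m : 8 <= 2 ^ (m + 2)).
    { replace 8 with (2 ^ 3) by (simpl; ring). apply Rle_pow; lia || lra. }
    assert (0 < 1 / 2 ^ (j + 1) <= 1 / 2).
    { split; [apply Rdiv_lt_0_compat; lra |]. apply Rle_div_l; [lra |].
      replace (1 / 2 * 2 ^ (j + 1)) with (2 ^ (j + 1) / 2) by field. apply Rle_div_r; lra. }
    assert (1 / 2 ^ (m + 2) <= 1 / 8).
    { apply Rle_div_l; [lra |]. replace (1 / 8 * 2 ^ (m + 2)) with (2 ^ (m + 2) / 8) by field.
      apply Rle_div_r; lra. }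
    split; lra.
  - intros j Hj. unfold alpha. destruct (Nat.ltb_spec j m); [lia | auto].
Qed.

(* Modulo 1, [partial_sum e j (S n)] is [numer e n / Qn n ^ (j + 1)] for every [j < m]:
   the factor [Rn n ^ m] is [1] modulo [Qn n ^ (m + 3)]. *)
Fixpoint numer (e : nat -> bool) (n : nat) : R :=
  match n with O => 1 | S n' => numer e n' * Rn n' ^ m + Qn n' ^ expo e n' end.

Lemma numer_int e n : is_int (numer e n).
Proof. induction n; simpl; auto with int. Qed.

#[local] Hint Resolve numer_int : int.

Lemma Rn_pow_congr n k : exists Y, is_int Y /\ Rn n ^ k = 1 + Qn n ^ (m + 3) * Y.
Proof.
  destruct (pow_one_plus_sub_one (Qn n ^ (m + 3)) k ltac:(auto with int)) as [Y [HY E]].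
  exists Y. split; auto. unfold Rn. lra.
Qed.

Lemma partial_sum_congr e j n : (j < m)%nat ->
  is_int (partial_sum e j (S n) - numer e n / Qn n ^ (j + 1)).
Proof.
  intros Hj. induction n as [| n IH].
  - unfold partial_sum. simpl.
    replace (0 + 1 / Qn 0 ^ (j + 1) - 1 / Qn 0 ^ (j + 1)) with 0 by ring. auto with int.
  - pose proof (Qn_ge_2 n) as HQ. assert (0 < Rn n) by (unfold Rn; pose proof (pow_le (Qn n) (m + 3)); lra).
    destruct (Rn_pow_congr n (m - (j + 1))) as [Y [HY EY]].
    assert (HR : Rn n ^ m = Rn n ^ (j + 1) * Rn n ^ (m - (j + 1))) by (rewrite <- pow_add; f_equal; lia).
    assert (HQm : Qn n ^ (m + 3) = Qn n ^ (j + 1) * Qn n ^ (m + 3 - (j + 1)))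
      by (rewrite <- pow_add; f_equal; lia).
    replace (partial_sum e j (S (S n)) - numer e (S n) / Qn (S n) ^ (j + 1))
      with ((partial_sum e j (S n) - numer e n / Qn n ^ (j + 1))
            - numer e n * Y * Qn n ^ (m + 3 - (j + 1))).
    + auto with int.
    + unfold partial_sum. simpl sumN. simpl series_term. simpl numer.
      rewrite Qn_S, Rpow_mult_distr, HR, EY, HQm. field. split; apply pow_nonzero; lra.
Qed.

Lemma numer_coprime e n : int_coprime (numer e n) (Qn n).
Proof.
  induction n as [| n [p [q [Hp [Hq E]]]]].
  { exists 1, 0. split; [| split]; auto with int. simpl; ring. }
  rewrite Qn_S. assert (Hs : (1 <= expo e n <= 2)%nat) by (unfold expo; destruct (e n); lia).
  apply int_coprime_mult; auto with int.
  - destruct (Rn_pow_congr n m) as [Y [HY EY]].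
    set (Z := numer e n * Qn n ^ (m + 2) * Y + Qn n ^ (expo e n - 1)).
    assert (HZ : numer e (S n) = numer e n + Qn n * Z).
    { simpl numer. rewrite EY. unfold Z.
      replace (Qn n ^ (m + 3)) with (Qn n * Qn n ^ (m + 2))
        by (replace (m + 3)%nat with (S (m + 2)) by lia; reflexivity).
      rewrite (pow_pred_mult (Qn n) (expo e n)) by lia.
      ring. }
    exists p, (q - p * Z). split; [| split]; [auto | unfold Z; auto 10 with int |].
    rewrite HZ. rewrite <- E. ring.
  - set (p' := - Qn n ^ (m + 3 - expo e n)).
    assert (Hc : p' * Qn n ^ expo e n + Rn n = 1).
    { unfold p', Rn. replace (Qn n ^ (m + 3)) with (Qn n ^ (m + 3 - expo e n) * Qn n ^ expo e n)
        by (rewrite <- pow_add; f_equal; lia). ring. }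
    exists p', (1 - p' * numer e n * Rn n ^ (m - 1)).
    split; [| split]; [unfold p'; auto with int | unfold p'; auto 10 with int |].
    simpl numer. rewrite (pow_pred_mult (Rn n) m) by lia.
    rewrite <- Hc at 2. ring.
Qed.

Lemma partial_sum_agree e e' j N : (forall k, (S k < N)%nat -> e k = e' k) ->
  partial_sum e j N = partial_sum e' j N.
Proof.
  intros H. apply sumN_ext. intros [| n] Hn; simpl; [reflexivity |].
  unfold expo. now rewrite H by lia.
Qed.

(* The first differing bit changes the term of index [k + 1] by at least
   [Qn k / Qn (k + 1)], which exceeds the whole remaining tail. *)
Lemma alpha_separated e e' k : (forall i, (i < k)%nat -> e i = e' i) ->
  e k = true -> e' k = false -> alpha e' 0 < alpha e 0.
Proof.
  intros Hagree Hek He'k.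
  assert (HA : partial_sum e 0 (S k) = partial_sum e' 0 (S k))
    by (apply partial_sum_agree; intros; apply Hagree; lia).
  destruct (alpha_bounds e 0 (S k) Hm) as [A1 _].
  destruct (alpha_bounds e' 0 (S k) Hm) as [_ B2].
  assert (Ee : partial_sum e 0 (S (S k)) = partial_sum e 0 (S k) + Qn k ^ 2 / Qn (S k) ^ 1)
    by (unfold partial_sum; simpl sumN; simpl series_term; unfold expo; now rewrite Hek).
  assert (Ee' : partial_sum e' 0 (S (S k)) = partial_sum e' 0 (S k) + Qn k ^ 1 / Qn (S k) ^ 1)
    by (unfold partial_sum; simpl sumN; simpl series_term; unfold expo; now rewrite He'k).
  pose proof (Qn_ge_2 k). pose proof (Qn_ge_2 (S k)).
  assert (Hgap : 2 * tail_bound (S k) < Qn k ^ 2 / Qn (S k) ^ 1 - Qn k ^ 1 / Qn (S k) ^ 1).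
  { unfold tail_bound.
    assert (Qn (S k) < Qn (S k) ^ (m + 2)).
    { replace (m + 2)%nat with (S (S m)) by lia. simpl.
      assert (1 <= Qn (S k) ^ m) by (apply pow_R1_Rle; lra). nra. }
    replace (Qn k ^ 2 / Qn (S k) ^ 1 - Qn k ^ 1 / Qn (S k) ^ 1)
      with ((Qn k ^ 2 - Qn k) / Qn (S k)) by (simpl; field; lra).
    replace (2 * (1 / Qn (S k) ^ (m + 2))) with (2 / Qn (S k) ^ (m + 2)) by (field; lra).
    apply Rlt_div_l; [lra |].
    replace ((Qn k ^ 2 - Qn k) / Qn (S k) * Qn (S k) ^ (m + 2))
      with ((Qn k ^ 2 - Qn k) * (Qn (S k) ^ (m + 2) / Qn (S k))) by (field; lra).
    assert (1 < Qn (S k) ^ (m + 2) / Qn (S k)) by (apply Rlt_div_r; lra).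
    assert (2 <= Qn k ^ 2 - Qn k) by (simpl; nra).
    nra. }
  lra.
Qed.

Lemma alpha_injective e e' : alpha e = alpha e' -> forall k, e k = e' k.
Proof.
  intros Heq k. destruct (Bool.bool_dec (e k) (e' k)) as [| Hne]; auto. exfalso.
  destruct (Wf_nat.dec_inh_nat_subset_has_unique_least_element (fun i => e i <> e' i))
    as [k0 [[Hk0 Hmin] _]].
  { intros i. destruct (Bool.bool_dec (e i) (e' i)); tauto. }
  { now exists k. }
  assert (Hagree : forall i, (i < k0)%nat -> e i = e' i).
  { intros i Hi. destruct (Bool.bool_dec (e i) (e' i)) as [| Hi']; auto.
    specialize (Hmin i Hi'). lia. }
  destruct (e k0) eqn:E1, (e' k0) eqn:E2; try congruence.
  - pose proof (alpha_separated e e' k0 Hagree E1 E2). rewrite Heq in H. lra.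
  - assert (Hagree' : forall i, (i < k0)%nat -> e' i = e i) by (intros; symmetry; auto).
    pose proof (alpha_separated e' e k0 Hagree' E2 E1). rewrite Heq in H. lra.
Qed.

Lemma alpha_level_qi e i : exists f,
  qi_map T1 (warped_dist m (alpha e) (Qn i ^ (m + 1))) (Torus m)
         (fun x y => Qn i * torus_dist m x y) (7 * (INR m + 1) ^ 2) (INR m + 1) f.
Proof.
  destruct (int_coprime_pow (numer e i) (Qn i) m ltac:(auto with int) ltac:(auto with int)
              (numer_coprime e i)) as [bu [bq [Hbu [Hbq Hb]]]].
  eexists. apply level_quasi_isometry with (u := numer e i) (bu := bu) (bq := bq)
    (c := fun j => partial_sum e j (S i) - numer e i / Qn i ^ (j + 1))
    (eps := fun j => alpha e j - partial_sum e j (S i)); auto using Qn_ge_2 with int.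
  - intros j Hj. ring.
  - intros j Hj. now apply partial_sum_congr.
  - intros j Hj. destruct (alpha_bounds e j i Hj). unfold tail_bound in *.
    pose proof (Qn_ge_2 i). assert (0 < Qn i ^ (m + 2)) by (apply pow_lt; lra).
    replace (2 / Qn i ^ (m + 2)) with (2 * (1 / Qn i ^ (m + 2))) by (field; lra). lra.
Qed.

End Tower.

Theorem propositionA3 (m : nat) (hm : (0 < m)%nat) :
  exists (t tau : nat -> nat),
    strictly_increasing t /\ strictly_increasing tau /\
    (forall i, (0 < t i)%nat) /\
    exists S : (nat -> R) -> Prop,
      uncountable S /\
      (forall alpha, S alpha -> tuple_in_01 m alpha) /\
      (forall alpha, S alpha ->
         QI_seq (fun _ z => T1 z)
                (fun i => warped_dist m alpha (INR (t i)))
                (fun _ x => Torus m x)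
                (fun i x y => INR (tau i) * torus_dist m x y)).
Proof.
  exists (fun i => (modulus m i ^ (m + 1))%nat), (modulus m).
  split; [| split; [| split]].
  - intros i j Hij. apply Nat.pow_lt_mono_l; [lia | now apply modulus_increasing].
  - apply modulus_increasing.
  - intros i. pose proof (modulus_ge_2 m i). apply Nat.neq_0_lt_0, Nat.pow_nonzero. lia.
  - exists (fun a => exists e, a = alpha m e). split; [| split].
    + apply uncountable_image_bool_seq, alpha_injective; auto.
    + intros a [e ->]. now apply alpha_tuple.
    + intros a [e ->]. pose proof (pos_INR m).
      apply (QI_seq_of_qi_maps _ _ _ _ (7 * (INR m + 1) ^ 2) (INR m + 1)); [simpl; nra | lra |].
      intros i. rewrite pow_INR. now apply alpha_level_qi.
Qed.
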